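(* Let $A,B\in\mathbb{R}^{m\times n}$ with $A\ne0$, $B\neq0$ and $\operatorname{rank}(A+B)>1$. Choose $(i,j)$ with $a_{i,j}\neq0$, and assume it is not the case that ($b_{i,j}\neq0$ and $\operatorname{rank}(A-\frac{a_{i,j}}{b_{i,j}}B)=1$). Define $\mathbf{r}_j(\lambda)=A^{(j)}+\lambda B^{(j)}$ and $\mathbf{c}_i(\lambda)^\mathsf{T}=\frac{1}{a_{i,j}+\lambda b_{i,j}}(A_{(i)}+\lambda B_{(i)})$ (for $a_{i,j}+\lambda b_{i,j}\neq0$), and $f_{s,t}(i,j;\lambda)=a_{s,t}+\lambda b_{s,t}-\frac{(a_{s,j}+\lambda b_{s,j})(a_{i,t}+\lambda b_{i,t})}{a_{i,j}+\lambda b_{i,j}}$. Pick any $(l,k)$ such that $f_{l,k}(i,j;\lambda)$ is not identically zero, and let $\hat\Lambda$ be the (at most two-element) set of $\hat\lambda\in\mathbb{C}$ with $a_{i,j}+\hat\lambda b_{i,j}\neq0$ and $f_{l,k}(i,j;\hat\lambda)=0$. Then there exists $\lambda^*\in\mathbb{C}$ with $\operatorname{rank}(A+\lambda^*B)=1$ if and only if some $\hat\lambda\in\hat\Lambda$ satisfies $A+\hat\lambda B=\mathbf{r}_j(\hat\lambda)\mathbf{c}_i(\hat\lambda)^\mathsf{T}$.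
   Context: For a matrix $M$, $M_{(i)}$ is its $i$-th row, $M^{(j)}$ its $j$-th column, and $m_{i,j}$ its $(i,j)$ entry. Ranks are over $\mathbb{C}$. A rational function is identically zero iff its numerator is the zero polynomial. *)

From HB Require Import structures.
From mathcomp Require Import all_boot all_order all_algebra.
Set Implicit Arguments. Unset Strict Implicit. Unset Printing Implicit Defensive.
Import Order.TTheory GRing.Theory Num.Theory.
Local Open Scope ring_scope.

Section Defs.
Variables (C : numClosedFieldType) (m n : nat).

Definition real_mx (A : 'M[C]_(m, n)) : Prop := forall s t, A s t \is Num.real.

Definition rvec (A B : 'M[C]_(m, n)) (j : 'I_n) (lam : C) : 'cV[C]_m :=
  col j A + lam *: col j B.

Definition cvecT (A B : 'M[C]_(m, n)) (i : 'I_m) (j : 'I_n) (lam : C) : 'rV[C]_n :=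
  (A i j + lam * B i j)^-1 *: (row i A + lam *: row i B).

Definition fval (A B : 'M[C]_(m, n)) (i : 'I_m) (j : 'I_n) (s : 'I_m) (t : 'I_n)
  (lam : C) : C :=
  A s t + lam * B s t
  - (A s j + lam * B s j) * (A i t + lam * B i t) / (A i j + lam * B i j).

(* numerator polynomial of the rational function f_{s,t}(i,j;.) :
   (a_st + X b_st)(a_ij + X b_ij) - (a_sj + X b_sj)(a_it + X b_it) *)
Definition fnum (A B : 'M[C]_(m, n)) (i : 'I_m) (j : 'I_n) (s : 'I_m) (t : 'I_n)
  : {poly C} :=
  ((A s t)%:P + B s t *: 'X) * ((A i j)%:P + B i j *: 'X)
  - ((A s j)%:P + B s j *: 'X) * ((A i t)%:P + B i t *: 'X).

(* f_{s,t}(i,j;.) is identically zero iff its numerator is the zero polynomial *)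
Definition f_ident_zero (A B : 'M[C]_(m, n)) (i : 'I_m) (j : 'I_n) (s : 'I_m) (t : 'I_n) : Prop := fnum A B i j s t = 0.

Definition in_Lambda_hat (A B : 'M[C]_(m, n)) (i : 'I_m) (j : 'I_n) (l : 'I_m) (k : 'I_n) (lam : C) : Prop :=
  A i j + lam * B i j != 0 /\ fval A B i j l k lam = 0.

End Defs.

From HB Require Import structures.
From mathcomp Require Import all_boot all_order all_algebra.
From mathcomp Require Import ring.
Set Implicit Arguments. Unset Strict Implicit. Unset Printing Implicit Defensive.
Import Order.TTheory GRing.Theory Num.Theory.
Local Open Scope ring_scope.

(* A matrix M over a field has rank one exactly when it is a
   nonzero outer product; and when M has rank one and a nonzero pivot entry
   M_ij, it factors as M = M^(j) (M_(i) / M_ij), because every 2x2 minor of M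
   vanishes.  The theorem concerns the pencil P(lam) = A + lam B, whose j-th
   column is r_j(lam), whose i-th row is A_(i) + lam B_(i), whose (i,j) entry
   is the denominator a_ij + lam b_ij, and for which f_{l,k}(i,j;lam) is the
   (l,k;i,j) minor of P(lam) divided by that denominator.
   - If rank P(lam0) = 1, the pivot P(lam0)_ij is nonzero: otherwise b_ij <> 0
     and P(lam0) = A - (a_ij/b_ij) B has rank one, which is excluded.  So lam0
     lies in Lambda-hat (the minor vanishes) and P(lam0) = r_j c_i^T.
   - Conversely r_j(lam) c_i^T(lam) is an outer product with nonzero (i,j)
     entry a_ij + lam b_ij, hence has rank one. *)

Section RankOne.
Variables (F : fieldType) (m n : nat).

Lemma rank1_minor (M : 'M[F]_(m, n)) :
  \rank M = 1%N -> forall s t i j, M s t * M i j = M s j * M i t.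
Proof.
move=> rk1; have := mulmx_base M.
move: (col_base M) (row_base M); rewrite rk1 => c r <- s t i j.
by rewrite !mxE !big_ord1; ring.
Qed.

Lemma rank1_outer (M : 'M[F]_(m, n)) i j :
  \rank M = 1%N -> M i j != 0 -> M = col j M *m ((M i j)^-1 *: row i M).
Proof.
move=> rk1 piv; apply/matrixP => s t; rewrite !mxE big_ord1 !mxE.
by rewrite mulrCA -(rank1_minor rk1) [_ * M i j]mulrC mulKf.
Qed.

Lemma outer_rank1 (c : 'cV[F]_m) (r : 'rV[F]_n) :
  c *m r != 0 -> \rank (c *m r) = 1%N.
Proof.
move=> nz; apply/eqP; rewrite eqn_leq lt0n mxrank_eq0 nz andbT.
by rewrite (leq_trans (mxrankM_maxl _ _)) ?rank_leq_col.
Qed.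

End RankOne.

Section Pencil.
Variables (C : numClosedFieldType) (m n : nat) (A B : 'M[C]_(m, n)).
Variables (i : 'I_m) (j : 'I_n).

Lemma pencilE (lam : C) s t : (A + lam *: B) s t = A s t + lam * B s t.
Proof. by rewrite !mxE. Qed.

Lemma rvec_pencil (lam : C) : rvec A B j lam = col j (A + lam *: B).
Proof. by apply/matrixP => ? ?; rewrite !mxE. Qed.

Lemma cvecT_pencil (lam : C) :
  cvecT A B i j lam = ((A + lam *: B) i j)^-1 *: row i (A + lam *: B).
Proof. by apply/matrixP => ? ?; rewrite !mxE. Qed.

Lemma fval_rank1 (lam : C) l k :
  \rank (A + lam *: B)%R = 1%N -> A i j + lam * B i j != 0 ->
  fval A B i j l k lam = 0.
Proof.
move=> rk1 piv; have := rank1_minor rk1 l k i j; rewrite !pencilE => minor.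
by rewrite /fval -minor mulfK // subrr.
Qed.

Lemma pencil_pivot0 (lam : C) :
  A i j != 0 -> A i j + lam * B i j = 0 ->
  B i j != 0 /\ A + lam *: B = A - (A i j / B i j) *: B.
Proof.
move=> Aij piv0; have Bij : B i j != 0.
  by apply: contraNneq Aij => B0; rewrite -piv0 B0 mulr0 addr0.
split=> //; suff -> : lam = - (A i j / B i j) by rewrite scaleNr.
apply: (mulIf Bij); rewrite mulNr mulfVK //; apply/eqP.
by rewrite -addr_eq0 addrC piv0.
Qed.

End Pencil.

Theorem mainTheorem7 (C : numClosedFieldType) (m n : nat)
  (A B : 'M[C]_(m, n)) (i : 'I_m) (j : 'I_n) (l : 'I_m) (k : 'I_n) :
  real_mx A -> real_mx B ->
  A != 0 -> B != 0 -> (1 < \rank (A + B)%R)%N ->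
  A i j != 0 ->
  ~ (B i j != 0 /\ \rank (A - (A i j / B i j) *: B)%R = 1%N) ->
  ~ f_ident_zero A B i j l k ->
  (exists lam : C, \rank (A + lam *: B)%R = 1%N) <->
  (exists2 lam : C, in_Lambda_hat A B i j l k lam &
     A + lam *: B = rvec A B j lam *m cvecT A B i j lam).
Proof.
move=> _ _ _ _ _ Aij not_rank1_at_pole _; split.
- move=> [lam rk1].
  have piv : A i j + lam * B i j != 0.
    apply/eqP => piv0; have [Bij pole] := pencil_pivot0 Aij piv0.
    by apply: not_rank1_at_pole; rewrite -pole.
  exists lam; first by split; last exact: fval_rank1.
  rewrite rvec_pencil cvecT_pencil; apply: rank1_outer => //.
  by rewrite pencilE.
- move=> [lam [piv _] factor]; exists lam; rewrite factor outer_rank1 //.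
  apply: contraNneq piv => /(congr1 (fun M : 'M[C]_(m, n) => M i j)).
  by rewrite -factor pencilE mxE => ->.
Qed.
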